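(* Let $n$ be a positive integer and suppose there exists a 1-D $(n,4,2)$-OOC with exactly $J(1\times n,4,2)$ codewords. (1) If $n\equiv 1,3\pmod 6$ or $n\equiv 2,10\pmod{24}$, then for every factorization $n=uv$ with $u,v$ positive integers there exists a 2-D $(u\times v,4,2)$-OOC with exactly $J(u\times v,4,2)$ codewords. (2) If $n\equiv 4,20\pmod{24}$ and $n=2n_1$, then there exists a 2-D $(2\times n_1,4,2)$-OOC with exactly $J(2\times n_1,4,2)$ codewords.
   Context: A two-dimensional $(u\times v,k,\lambda)$ optical orthogonal code (2-D $(u\times v,k,\lambda)$-OOC) is a family $\mathcal C$ of $u\times v$ $(0,1)$-matrices, each of Hamming weight $k$, such that for all $A=(a_{ij}),B=(b_{ij})\in\mathcal C$ and every integer $r$ with $A\neq B$ or $r\not\equiv 0\pmod v$, one has $\sum_{i=0}^{u-1}\sum_{j=0}^{v-1}a_{ij}b_{i,j+r}\le\lambda$, column indices taken modulo $v$. A 1-D $(v,k,\lambda)$-OOC is a 2-D $(1\times v,k,\lambda)$-OOC. For $k=4,\lambda=2$ the Johnson bound is $J(u\times v,4,2)=\lfloor\frac{u}{4}\lfloor\frac{uv-1}{3}\lfloor\frac{uv-2}{2}\rfloor\rfloor\rfloor$. *)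

From mathcomp Require Import all_boot all_algebra.
Set Implicit Arguments. Unset Strict Implicit. Unset Printing Implicit Defensive.

Lemma ord_pos (v : nat) (j : 'I_v) : 0 < v.
Proof. exact: leq_ltn_trans (leq0n j) (ltn_ord j). Qed.

Definition colshift (v : nat) (j : 'I_v) (r : nat) : 'I_v :=
  Ordinal (ltn_pmod (j + r) (ord_pos j)).

Definition hweight (u v : nat) (A : 'M[bool]_(u, v)) : nat :=
  \sum_(i < u) \sum_(j < v) (A i j : nat).

Definition corr (u v : nat) (A B : 'M[bool]_(u, v)) (r : nat) : nat :=
  \sum_(i < u) \sum_(j < v) ((A i j && B i (colshift j r)) : nat).

(* 2-D (u x v, k, lambda)-OOC.  Shifts r range over nat; since column indices
   are taken mod v, this covers every integer shift. *)
Definition is_OOC (u v k lam : nat) (C : {set 'M[bool]_(u, v)}) : Prop :=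
  (forall A, A \in C -> hweight A = k) /\
  (forall A B (r : nat), A \in C -> B \in C ->
     (A != B) || (r %% v != 0) -> corr A B r <= lam).

(* Johnson bound J(u x v, 4, 2) = floor(u/4 floor((uv-1)/3 floor((uv-2)/2))) *)
Definition J42 (u v : nat) : nat :=
  (u * (((u * v - 1) * ((u * v - 2) %/ 2)) %/ 3)) %/ 4.

From mathcomp Require Import all_boot all_algebra.
From mathcomp Require Import zify.

Set Implicit Arguments. Unset Strict Implicit. Unset Printing Implicit Defensive.

(* Let C be a 1-D (N,4,2)-OOC and N = u * v.  Reading a
   codeword A cyclically, every offset a < u gives the u x v matrix
   fold A a with entries (i, j) |-> A (i + u j + a  mod N).  Folding
   preserves the weight, and the correlation of two folded matrices at
   column shift r is the 1-D correlation of A and B at the shift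
   u r + b + N - a.  That shift is trivial mod N only when a = b and
   r = 0 mod v, so the folded family is a 2-D (u x v,4,2)-OOC with
   #|C| * u codewords (injectivity is the case r = 0 of the same bound).

   Writing X(n) = floor((n-1) floor((n-2)/2) / 3), we have
   J(u x v,4,2) = floor(u X(uv) / 4) and J(1 x n,4,2) = floor(X(n) / 4).
   Hence u * J(1 x n) = J(u x v) as soon as u * (X(n) mod 4) < 4.  Since
   X(n) mod 4 only depends on n mod 24, a finite check shows X(n) = 0 mod 4
   in case (1) and X(n) = 1 mod 4 in case (2), where u = 2. *)

Section CyclicRow.
Variables (N : nat) (hN : 0 < N).

Definition cyc (A : 'M[bool]_(1, N)) (x : nat) : bool :=
  A ord0 (Ordinal (ltn_pmod x hN)).

Lemma cyc_mod A x : cyc A (x %% N) = cyc A x.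
Proof. by rewrite /cyc; congr (A _ _); apply: val_inj; rewrite /= modn_mod. Qed.

Lemma cyc_ord A (j : 'I_N) : cyc A j = A ord0 j.
Proof. by rewrite /cyc; congr (A _ _); apply: val_inj; rewrite /= modn_small. Qed.

Lemma hweight_cyc A : hweight A = \sum_(x < N) (cyc A x : nat).
Proof. by rewrite /hweight big_ord1; apply: eq_bigr => j _; rewrite cyc_ord. Qed.

Lemma corr_cyc A B s :
  corr A B s = \sum_(x < N) ((cyc A x && cyc B (x + s)) : nat).
Proof.
rewrite /corr big_ord1; apply: eq_bigr => j _; rewrite cyc_ord.
by congr (nat_of_bool (_ && _)); rewrite /cyc; congr (B _ _); apply: val_inj.
Qed.

End CyclicRow.

Lemma sum_grid u v (G : nat -> nat) :
  \sum_(i < u) \sum_(j < v) G (i + u * j) = \sum_(x < u * v) G x.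
Proof.
rewrite exchange_big /=; elim: v => [|v IH]; first by rewrite muln0 !big_ord0.
rewrite big_ord_recr /= IH -[RHS](big_mkord xpredT).
rewrite (@big_cat_nat _ _ _ (u * v)) //=; last by lia.
congr (_ + _); first by rewrite big_mkord.
rewrite -{2}(add0n (u * v)) big_addn mulnS addnK big_mkord.
by apply: eq_bigr => i _; rewrite addnC.
Qed.

Lemma sum_shift N (F : nat -> nat) a : 0 < N -> (forall x, F (x %% N) = F x) ->
  \sum_(x < N) F (x + a) = \sum_(x < N) F x.
Proof.
move=> N_gt0; have rotate1 (G : nat -> nat) : (forall x, G (x %% N) = G x) ->
    \sum_(x < N) G x.+1 = \sum_(x < N) G x.
  case: N N_gt0 => // N _ G_periodic.
  rewrite -(big_mkord xpredT (fun x => G x.+1)) -(big_mkord xpredT G).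
  by rewrite big_nat_recr //= big_nat_recl //= -[G N.+1]G_periodic modnn addnC.
elim: a F => [|a IH] F F_periodic; first by apply: eq_bigr => i _; rewrite addn0.
rewrite -[RHS]IH // -[RHS](rotate1 (fun x => F (x + a))).
  by apply: eq_bigr => i _; rewrite addnS.
by move=> x; rewrite -F_periodic modnDml F_periodic.
Qed.

Section Fold.
Variables (N : nat) (hN : 0 < N) (u v : nat) (huv : u * v = N).

Definition fold (A : 'M[bool]_(1, N)) (a : nat) : 'M[bool]_(u, v) :=
  \matrix_(i, j) cyc hN A (i + u * j + a).

Lemma sum_fold (F : nat -> nat) a : (forall x, F (x %% N) = F x) ->
  \sum_(i < u) \sum_(j < v) F (i + u * j + a) = \sum_(x < N) F x.
Proof.
by move=> F_periodic; rewrite (sum_grid u v (fun x => F (x + a))) huv sum_shift.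
Qed.

Lemma hweight_fold A a : hweight (fold A a) = hweight A.
Proof.
rewrite hweight_cyc -(@sum_fold (fun x => cyc hN A x : nat) a).
  by apply: eq_bigr => i _; apply: eq_bigr => j _; rewrite mxE.
by move=> x; rewrite cyc_mod.
Qed.

(* Shifting the columns of fold B b by r shifts the row B by u r, the
   wrap-around of the column index being absorbed by the period N = u v. *)
Lemma corr_fold A B a b r : a <= N ->
  corr (fold A a) (fold B b) r = corr A B (u * r + b + N - a).
Proof.
move=> aN; set s := u * r + b + N - a.
rewrite corr_cyc /corr -(@sum_fold (fun x => cyc hN A x && cyc hN B (x + s) : nat) a).
  apply: eq_bigr => i _; apply: eq_bigr => j _; rewrite !mxE /=.
  congr (nat_of_bool (_ && _)); rewrite -cyc_mod -[RHS]cyc_mod; congr (cyc _ _ _).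
  have column_wrap := divn_eq (j + r) v.
  have -> : i + u * j + a + s = i + u * ((j + r) %% v) + b + ((j + r) %/ v).+1 * N.
    by rewrite /s -huv; nia.
  by rewrite [in RHS]addnC modnMDl.
by move=> x; rewrite cyc_mod -[cyc hN B (x + s)]cyc_mod -modnDml cyc_mod.
Qed.

End Fold.

Lemma fold_shift_trivial u v a b r : 0 < u -> 0 < v -> a < u -> b < u ->
  (u * r + b + u * v - a) %% (u * v) = 0 -> a = b /\ r %% v = 0.
Proof.
move=> u_gt0 v_gt0 a_lt b_lt /eqP; rewrite -/(dvdn _ _) => /dvdnP [k shift].
have a_le : a <= u * v by nia.
have lift : k * (u * v) + a = u * (r + v) + b by rewrite -shift; lia.
have ab : a = b.
  move: (congr1 (modn^~ u) lift).
  by rewrite mulnCA !(mulnC u) !modnMDl !modn_small.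
split => //; move: lift; rewrite ab => /addIn /eqP.
rewrite mulnCA eqn_pmul2l // => /eqP periods.
by rewrite -(modnDr r v) -periods modnMl.
Qed.

Lemma corr_self u v (M : 'M[bool]_(u, v)) : corr M M 0 = hweight M.
Proof.
apply: eq_bigr => i _; apply: eq_bigr => j _.
have -> : colshift j 0 = j by apply: val_inj; rewrite /= addn0 modn_small.
by rewrite andbb.
Qed.

Section FoldedCode.
Variables (N u v : nat) (hN : 0 < N) (u_gt0 : 0 < u) (v_gt0 : 0 < v).
Hypothesis huv : u * v = N.
Variables (C : {set 'M[bool]_(1, N)}) (k lam : nat).
Hypothesis C_OOC : is_OOC k lam C.

Definition folded_code : {set 'M[bool]_(u, v)} :=
  (fun p : 'M[bool]_(1, N) * 'I_u => fold hN u v p.1 p.2) @: setX C [set: 'I_u].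

Lemma offset_le (a : 'I_u) : a <= N.
Proof. by rewrite -huv; apply: leq_trans (ltnW (ltn_ord a)) (leq_pmulr u v_gt0). Qed.

Lemma folded_corr A B (a b : 'I_u) r : A \in C -> B \in C ->
  ((A, a) != (B, b)) || (r %% v != 0) ->
  corr (fold hN u v A a) (fold hN u v B b) r <= lam.
Proof.
move=> AC BC distinct; rewrite (corr_fold hN huv) ?offset_le //.
apply: C_OOC.2 => //; apply: contraTT distinct; rewrite negb_or !negbK.
move=> /andP [/eqP <- /eqP trivial]; rewrite -huv in trivial.
have [ab r_triv] := fold_shift_trivial u_gt0 v_gt0 (ltn_ord a) (ltn_ord b) trivial.
have a_eq_b : a = b := val_inj ab.
by rewrite negb_or !negbK r_triv andbT a_eq_b.
Qed.

Lemma folded_code_OOC : is_OOC k lam folded_code.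
Proof.
split.
  move=> M /imsetP [[A a]]; rewrite !inE /= => /andP [AC _] ->.
  by rewrite (hweight_fold hN huv) C_OOC.1.
move=> M1 M2 r /imsetP [[A a]]; rewrite !inE /= => /andP [AC _] ->.
move=> /imsetP [[B b]]; rewrite !inE /= => /andP [BC _] ->.
move=> distinct; apply: folded_corr => //; apply: contraTT distinct.
by rewrite !negb_or !negbK => /andP [/eqP [-> ->] ->]; rewrite eqxx.
Qed.

(* Folding is injective as soon as the weight exceeds lam: equal foldings
   would correlate in all k positions at shift 0. *)
Lemma card_folded_code : lam < k -> #|folded_code| = #|C| * u.
Proof.
move=> lam_lt_k; rewrite card_in_imset ?cardsX ?cardsT ?card_ord //.
move=> [A a] [B b]; rewrite !inE /= => /andP [AC _] /andP [BC _] same.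
apply/eqP; apply: contraTT lam_lt_k => distinct; rewrite -leqNgt.
have := folded_corr (r := 0) AC BC (introT orP (or_introl distinct)).
by rewrite same corr_self (hweight_fold hN huv) C_OOC.1.
Qed.

End FoldedCode.

Definition johnson_core (n : nat) : nat := ((n - 1) * ((n - 2) %/ 2)) %/ 3.

Lemma J42_core u v : J42 u v = (u * johnson_core (u * v)) %/ 4.
Proof. by []. Qed.

Lemma johnson_core_add24 n : 1 < n ->
  johnson_core (n + 24) %% 4 = johnson_core n %% 4.
Proof.
move=> n_gt1; rewrite /johnson_core.
have -> : (n + 24 - 2) %/ 2 = 12 + (n - 2) %/ 2.
  by rewrite (_ : n + 24 - 2 = 12 * 2 + (n - 2)) ?divnMDl //; lia.
set q := (n - 2) %/ 2.
have -> : (n + 24 - 1) * (12 + q) = (4 * (n - 1 + 2 * q + 24)) * 3 + (n - 1) * q.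
  by nia.
by rewrite divnMDl // mulnC modnMDl.
Qed.

Lemma johnson_core_mod24 n :
  johnson_core n %% 4 = johnson_core (24 + n %% 24) %% 4.
Proof.
rewrite {1}(divn_eq n 24) addnC; move: (n %/ 24) => q.
case: q => [|q].
  case: (ltnP 1 (n %% 24)) => [n_gt1 | n_le1].
    by rewrite addn0 addnC johnson_core_add24.
  by case: (n %% 24) n_le1 => [|[|]].
elim: q => [|q IH]; first by rewrite mul1n addnC.
by rewrite mulSnr addnA johnson_core_add24 ?IH //; lia.
Qed.

Lemma johnson_core_case1 n : (n %% 6 \in [:: 1; 3]) || (n %% 24 \in [:: 2; 10]) ->
  johnson_core n %% 4 = 0.
Proof.
rewrite johnson_core_mod24 -(modn_dvdm n (isT : 6 %| 24)).
by move: (n %% 24) (ltn_pmod n (isT : 0 < 24)) => s; do 24?case: s => [|s] //.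
Qed.

Lemma johnson_core_case2 n : n %% 24 \in [:: 4; 20] -> johnson_core n %% 4 = 1.
Proof.
rewrite johnson_core_mod24.
by move: (n %% 24) (ltn_pmod n (isT : 0 < 24)) => s; do 24?case: s => [|s] //.
Qed.

Lemma muln_div4 u X : u * (X %% 4) < 4 -> (u * X) %/ 4 = u * (X %/ 4).
Proof.
move=> small_rem.
by rewrite {1}(divn_eq X 4) mulnDr mulnA divnMDl // (divn_small small_rem) addn0.
Qed.

Lemma optimal_folded_code N u v : 0 < u -> 0 < v -> u * v = N ->
  u * (johnson_core N %% 4) < 4 ->
  (exists C : {set 'M[bool]_(1, N)}, is_OOC 4 2 C /\ #|C| = J42 1 N) ->
  exists C2 : {set 'M[bool]_(u, v)}, is_OOC 4 2 C2 /\ #|C2| = J42 u v.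
Proof.
move=> u_gt0 v_gt0 huv small_rem [C [C_OOC C_card]].
have N_gt0 : 0 < N by rewrite -huv muln_gt0 u_gt0.
exists (folded_code u v N_gt0 C).
split; first exact: (folded_code_OOC N_gt0 u_gt0 v_gt0 huv C_OOC).
rewrite (card_folded_code N_gt0 u_gt0 v_gt0 huv C_OOC) // C_card.
by rewrite (J42_core u v) huv muln_div4 // /J42 !mul1n mulnC.
Qed.

Theorem corollary2p5 (n : nat) (hn : 0 < n)
  (h1 : exists C : {set 'M[bool]_(1, n)}, is_OOC 4 2 C /\ #|C| = J42 1 n) :
  ((n %% 6 \in [:: 1; 3]) || (n %% 24 \in [:: 2; 10]) ->
     forall u v : nat, 0 < u -> 0 < v -> u * v = n ->
       exists C : {set 'M[bool]_(u, v)}, is_OOC 4 2 C /\ #|C| = J42 u v) /\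
  (n %% 24 \in [:: 4; 20] -> forall n1 : nat, n = 2 * n1 ->
       exists C : {set 'M[bool]_(2, n1)}, is_OOC 4 2 C /\ #|C| = J42 2 n1).
Proof.
split.
  move=> /johnson_core_case1 core_mod4 u v u_gt0 v_gt0 huv.
  by apply: (optimal_folded_code u_gt0 v_gt0 huv) h1; rewrite core_mod4 muln0.
move=> /johnson_core_case2 core_mod4 n1 hn1.
have n1_gt0 : 0 < n1 by move: hn; rewrite hn1 muln_gt0.
apply: (optimal_folded_code (isT : 0 < 2) n1_gt0 (esym hn1)) h1.
by rewrite core_mod4.
Qed.
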